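(* For every integer $N\geqslant 2$, the set of all non-empty compact sets in $\mathbb R^N$ that are in general position is a dense $G_\delta$ subset of $\mathcal K(\mathbb R^N)$. Also, the set of all non-empty compact sets in $\ell_2$ that are in general position is a dense $G_\delta$ subset of $\mathcal K(\ell_2)$.
   Context: For a complete metric space $X$, $\mathcal K(X)$ denotes the space of all non-empty compact subsets of $X$ with the Hausdorff metric. $\ell_2$ is the separable real Hilbert space. A subset $M\subset\mathbb R^N$ (resp. $M\subset\ell_2$) is in general position if for every integer $d\leqslant N$ (resp. every integer $d\geqslant 1$) and every $d+1$ pairwise distinct points $A_0,\dots,A_d\in M$, these points are affinely independent, i.e. the affine subspace they generate has dimension $d$. *)

From HB Require Import structures.
From mathcomp Require Import all_boot all_order all_algebra.
From mathcomp Require Import all_classical all_reals all_analysis.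
Set Implicit Arguments. Unset Strict Implicit. Unset Printing Implicit Defensive.
Import Order.TTheory GRing.Theory Num.Theory.
Import numFieldNormedType.Exports.
Local Open Scope classical_set_scope.
Local Open Scope ring_scope.

Section Defs.
Variable R : realType.

(** ** Generic metric-space notions.
    A metric space is given by a carrier set [S : set T] and a distance
    [d : T -> T -> R] (the values of [d] outside [S] are irrelevant). *)

Definition mconv (T : Type) (d : T -> T -> R) (x : nat -> T) (l : T) : Prop :=
  (fun n => d (x n) l) @ \oo --> (0 : R).

Definition mcompact (T : Type) (S : set T) (d : T -> T -> R) (K : set T) : Prop :=
  K `<=` S /\
  forall x : nat -> T, (forall n, K (x n)) ->
    exists (phi : nat -> nat) (l : T),
      (forall n, (phi n < phi n.+1)%N) /\ K l /\ mconv d (x \o phi) l.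

Definition hyperspace (T : Type) (S : set T) (d : T -> T -> R) : set (set T) :=
  [set K | K !=set0 /\ mcompact S d K].

Definition hausdorff_dist (T : Type) (d : T -> T -> R) (A B : set T) : R :=
  Num.max (sup [set inf [set d a b | b in B] | a in A])
          (sup [set inf [set d a b | a in A] | b in B]).

Definition hopen (T : Type) (S : set T) (d : T -> T -> R) (U : set (set T)) : Prop :=
  U `<=` hyperspace S d /\
  forall A, U A -> exists2 e : R, 0 < e &
    forall B, hyperspace S d B -> hausdorff_dist d A B < e -> U B.

Definition hGdelta (T : Type) (S : set T) (d : T -> T -> R) (G : set (set T)) : Prop :=
  exists U : nat -> set (set T), (forall n, hopen S d (U n)) /\
    G = \bigcap_n U n.

Definition hdense (T : Type) (S : set T) (d : T -> T -> R) (G : set (set T)) : Prop :=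
  forall A, hyperspace S d A -> forall e : R, 0 < e ->
    exists2 B, G B & hausdorff_dist d A B < e.

(** ** Affine independence and general position, for points that are
    real-valued functions on an index set [I] (coordinates); linear
    combinations of finitely many points are taken coordinatewise. *)

Definition affinely_independent (I : Type) (d : nat) (A : 'I_d.+1 -> I -> R) : Prop :=
  forall lam : 'I_d.+1 -> R,
    \sum_(i < d.+1) lam i = 0 ->
    (forall j : I, \sum_(i < d.+1) lam i * A i j = 0) ->
    forall i, lam i = 0.

Definition general_position_wrt (I : Type) (P : nat -> Prop) (M : set (I -> R)) : Prop :=
  forall d : nat, P d -> forall A : 'I_d.+1 -> I -> R,
    (forall i, M (A i)) -> injective A -> affinely_independent A.

Definition euclid_dist (N : nat) (x y : 'I_N -> R) : R :=
  Num.sqrt (\sum_(i < N) (x i - y i) ^+ 2).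

Definition RN (N : nat) : set ('I_N -> R) := setT.

Definition general_position_RN (N : nat) (M : set ('I_N -> R)) : Prop :=
  general_position_wrt (fun d => (d <= N)%N) M.

Definition l2 : set (nat -> R) :=
  [set u : nat -> R | cvgn (series (fun n => u n ^+ 2))].

Definition l2_dist (u v : nat -> R) : R :=
  Num.sqrt (limn (series (fun n => (u n - v n) ^+ 2))).

Definition general_position_l2 (M : set (nat -> R)) : Prop :=
  general_position_wrt (fun d => (1 <= d)%N) M.

End Defs.

(* Both spaces are treated as pseudometric spaces of real functions on an index set,
   whose distance dominates every coordinate difference.

   Density: a compact set is within e/3 of a finite e/3-net x_0, ..., x_(m-1), and the net is
   moved into general position by adding u^-1 (i+1)^(j+1) to the j-th coordinate of x_i,
   for u large (in l_2 only the first m coordinates are moved).  An affine dependence among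
   n+1 of the new points is a kernel vector of a matrix V + u C, where V is a Vandermonde
   matrix; det (V + u C) is a polynomial in u which is nonzero at 0, so it has no roots
   beyond some bound.

   G_delta: for k and n, consider the compact sets in which every (n+1)-tuple of points
   separated in some coordinate by rho < 1/(k+1) is uniformly affinely independent (with a
   positive margin delta).  These sets are open, and their intersection is exactly the set
   of compact sets in general position: one inclusion is a compactness argument, the other
   follows from taking k large. *)

From mathcomp Require Import all_boot all_order all_algebra.
From mathcomp Require Import all_classical all_reals all_analysis.
From mathcomp Require Import ring lra.
Set Implicit Arguments. Unset Strict Implicit. Unset Printing Implicit Defensive.
Import Order.TTheory GRing.Theory Num.Theory.
Import numFieldNormedType.Exports.
Local Open Scope classical_set_scope.
Local Open Scope ring_scope.

(** * Subsequences *)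

Definition strict_incr (f : nat -> nat) := forall n, (f n < f n.+1)%N.

Lemma strict_incr_ltn f : strict_incr f -> {homo f : m n / (m < n)%N}.
Proof. by move=> f_incr; exact: (homo_ltn ltn_trans f_incr). Qed.

Lemma strict_incr_geq f : strict_incr f -> forall n, (n <= f n)%N.
Proof. by move=> f_incr; elim=> // n IH; exact: leq_ltn_trans IH (f_incr n). Qed.

Lemma strict_incr_comp f g : strict_incr f -> strict_incr g -> strict_incr (f \o g).
Proof. by move=> f_incr g_incr n; exact: strict_incr_ltn f_incr _ _ (g_incr n). Qed.

Lemma strict_incr_cvgn f : strict_incr f -> f @ \oo --> \oo.
Proof.
move=> f_incr A /= [N _ NA]; exists N => // n /= Nn.
by apply: NA; exact: leq_trans Nn (strict_incr_geq f_incr n).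
Qed.

Lemma finite_range_cst_subseq m (k : nat -> 'I_m) :
  exists f i, strict_incr f /\ forall n, k (f n) = i.
Proof.
have [i [A A_infinite Ak]] := finite_range_cst_subsequence (@finite_finset _ (range k)).
have [|f [/increasing_seqP f_incr _ Af]] := infinite_increasing_seq_wf _ A_infinite 0%N.
  by move=> n; apply: sub_finite_set (finite_II n.+1) => j /=.
by exists f, i; split=> // n; exact/(Ak _).1.
Qed.

Lemma cvgn_subseq (R : realType) (x : nat -> R) (l : R) f :
  x @ \oo --> l -> strict_incr f -> (x \o f) @ \oo --> l.
Proof. by move=> xl f_incr; exact: cvg_comp (strict_incr_cvgn f_incr) xl. Qed.

Lemma mconv_subseq (R : realType) (T : Type) (d : T -> T -> R) x l f :
  mconv d x l -> strict_incr f -> mconv d (x \o f) l.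
Proof. exact: cvgn_subseq. Qed.

Lemma common_subseq (X : Type) (good : X -> Prop) (cv : (nat -> X) -> X -> Prop) :
  (forall x l f, cv x l -> strict_incr f -> cv (x \o f) l) ->
  (forall x, (forall n, good (x n)) -> exists f l, strict_incr f /\ good l /\ cv (x \o f) l) ->
  forall m (u : nat -> 'I_m -> X), (forall n i, good (u n i)) ->
  exists f (a : 'I_m -> X), [/\ strict_incr f, forall i, good (a i) &
    forall i, cv (fun n => u (f n) i) (a i)].
Proof.
move=> cv_subseq cv_ex m u u_good.
suff /(_ (enum 'I_m))[f [a [f_incr a_good ua]]] : forall s : seq 'I_m, exists f (a : 'I_m -> X),
    [/\ strict_incr f, forall i, good (a i) &
         forall i, i \in s -> cv (fun n => u (f n) i) (a i)].
  by exists f, a; split=> // i; apply: ua; rewrite mem_enum.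
elim=> [|i s [f [a [f_incr a_good ua]]]]; first by exists id, (u 0%N); split.
have [g [l [g_incr [l_good ul]]]] := cv_ex (fun n => u (f n) i) (fun n => u_good _ _).
exists (f \o g), (fun j => if j == i then l else a j); split.
- exact: strict_incr_comp.
- by move=> j; case: ifP.
move=> j; rewrite in_cons; case: eqP => [-> _|_ /= js]; first exact: ul.
exact: cv_subseq (ua j js) g_incr.
Qed.

Lemma unit_ball_subseq (R : realType) (x : nat -> R) : (forall n, `|x n| <= 1) ->
  exists f l, strict_incr f /\ `|l| <= 1 /\ (x \o f) @ \oo --> l.
Proof.
move=> x_le1.
have [|f /increasing_seqP f_incr /cvg_ex[/= l xl]] := bolzano_weierstrass (u_ := x).
  by exists 1; split=> // M M1 n _; exact: le_trans (x_le1 n) (ltW M1).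
exists f, l; split=> //; split=> //; rewrite -(cvg_lim (@Rhausdorff R) (cvg_norm xl)).
apply: limr_le; first by apply/cvg_ex; exists `|l|; exact: cvg_norm.
exact: nearW (fun n => x_le1 (f n)).
Qed.

Lemma cvgn_sum (R : realType) m (u : nat -> 'I_m -> R) (l : 'I_m -> R) :
  (forall i, (fun n => u n i) @ \oo --> l i) -> (fun n => \sum_i u n i) @ \oo --> \sum_i l i.
Proof. by move=> ul; apply: cvg_big => //; exact: add_continuous. Qed.

Lemma cvgn_eq_cst (R : realType) (u : nat -> R) l c :
  u @ \oo --> l -> (forall n, u n = c) -> l = c.
Proof. by move=> ul /funext uc; rewrite -(cvg_lim (@Rhausdorff R) ul) uc lim_cst. Qed.

Lemma ler_sum_term (R : numDomainType) m (F : 'I_m -> R) i :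
  (forall j, 0 <= F j) -> F i <= \sum_j F j.
Proof. by move=> F_ge0; rewrite (bigD1 i) //= lerDl sumr_ge0. Qed.

(** * Compact sets in pseudometric spaces *)

Definition pseudometric_on (R : realType) (T : Type) (S : set T) (d : T -> T -> R) :=
  [/\ forall x y, S x -> S y -> 0 <= d x y, forall x, S x -> d x x = 0,
      forall x y, S x -> S y -> d x y = d y x &
      forall x y z, S x -> S y -> S z -> d x z <= d x y + d y z].

Section PseudometricAxioms.
Variables (R : realType) (T : Type) (S : set T) (d : T -> T -> R).
Hypothesis dP : pseudometric_on S d.

Lemma pmetric_ge0 x y : S x -> S y -> 0 <= d x y. Proof. by case: dP => + _ _ _; apply. Qed.
Lemma pmetric_xx x : S x -> d x x = 0. Proof. by case: dP => _ + _ _; apply. Qed.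
Lemma pmetric_sym x y : S x -> S y -> d x y = d y x. Proof. by case: dP => _ _ + _; apply. Qed.
Lemma pmetric_triangle x y z : S x -> S y -> S z -> d x z <= d x y + d y z.
Proof. by case: dP => _ _ _; apply. Qed.

End PseudometricAxioms.

Section Pseudometric.
Variables (R : realType) (T : Type) (S : set T) (d : T -> T -> R).
Hypothesis dP : pseudometric_on S d.

Let d_ge0 := pmetric_ge0 dP.
Let d_xx := pmetric_xx dP.
Let d_sym := pmetric_sym dP.
Let d_triangle := pmetric_triangle dP.

Lemma mconv_near x l : mconv d x l -> (forall n, S (x n)) -> S l ->
  forall e, 0 < e -> \forall n \near \oo, d (x n) l < e.
Proof.
move=> /cvgrPdist_lt xl Sx Sl e e_gt0; apply: filterS (xl e e_gt0) => n.
by rewrite sub0r normrN ger0_norm //; exact: d_ge0.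
Qed.

Lemma mcompact_bounded K p : mcompact S d K -> S p -> exists M, forall b, K b -> d p b <= M.
Proof.
move=> [KS K_cpt] Sp; apply: contrapT => /forallNP unbounded.
have /choice[b bP] n : exists b, K b /\ n%:R < d p b.
  have /existsNP[b /not_implyP[Kb /negP]] := unbounded n%:R.
  by rewrite -ltNge => lt_n; exists b; split.
have [f [l [f_incr [Kl bl]]]] := K_cpt b (fun n => (bP n).1).
have [N _ bl_lt1] := mconv_near bl (fun n => KS _ (bP _).1) (KS _ Kl) ltr01.
have [M _ M_ge] := nbhs_infty_ger (d p l + 1).
pose n := maxn N M; have Sbn := KS _ (bP (f n)).1.
have := d_triangle Sp (KS _ Kl) Sbn; rewrite (d_sym (KS _ Kl) Sbn).
have : n%:R <= (f n)%:R :> R by rewrite ler_nat strict_incr_geq.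
have := (bP (f n)).2; have := bl_lt1 n (leq_maxl _ _); have := M_ge n (leq_maxr _ _).
rewrite /=; lra.
Qed.

Lemma hausdorff_dist_approx A B e : hyperspace S d A -> hyperspace S d B ->
  hausdorff_dist d A B < e -> forall b, B b -> exists a, A a /\ d a b < e.
Proof.
move=> [[a0 Aa0] [AS _]] [_ B_cpt] AB_lt b Bb; have BS := B_cpt.1.
have dist_lb b' : B b' -> has_lbound [set d a b' | a in A].
  by move=> Bb'; exists 0 => _ [a Aa <-]; apply: d_ge0; [apply: AS|apply: BS].
have [M M_ub] := mcompact_bounded B_cpt (AS _ Aa0).
have inf_ub : has_ubound [set inf [set d a b' | a in A] | b' in B].
  exists M => _ [b' Bb' <-]; apply: le_trans (M_ub _ Bb').
  by apply: (ge_inf (dist_lb _ Bb')); exists a0.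
have inf_lt : inf [set d a b | a in A] < e.
  apply: le_lt_trans AB_lt; rewrite /hausdorff_dist le_max; apply/orP; right.
  by apply: (ub_le_sup inf_ub); exists b.
have e_gt0 : 0 < e - inf [set d a b | a in A] by rewrite subr_gt0.
have inf_ex : has_inf [set d a b | a in A] by split; [exists (d a0 b), a0|exact: dist_lb].
have [_ [a Aa <-]] := inf_adherent e_gt0 inf_ex.
by rewrite addrC subrK => lt_e; exists a.
Qed.

Lemma hausdorff_dist_le A B r : A !=set0 -> B !=set0 -> A `<=` S -> B `<=` S ->
  (forall a, A a -> exists2 b, B b & d a b <= r) ->
  (forall b, B b -> exists2 a, A a & d a b <= r) ->
  hausdorff_dist d A B <= r.
Proof.
move=> [a0 Aa0] [b0 Bb0] AS BS A_near B_near.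
have dist_lb (E : set T) x : E `<=` S -> S x -> has_lbound [set d x y | y in E].
  by move=> ES Sx; exists 0 => _ [y Ey <-]; apply: d_ge0 => //; exact: ES.
have dist_lb' (E : set T) y : E `<=` S -> S y -> has_lbound [set d x y | x in E].
  by move=> ES Sy; exists 0 => _ [x Ex <-]; apply: d_ge0 => //; exact: ES.
rewrite /hausdorff_dist ge_max; apply/andP; split; apply: ge_sup.
- by exists (inf [set d a0 b | b in B]); exists a0.
- move=> _ [a Aa <-]; have [b Bb ab_le] := A_near a Aa; apply: le_trans ab_le.
  by apply: (ge_inf (dist_lb _ _ BS (AS _ Aa))); exists b.
- by exists (inf [set d a b0 | a in A]); exists b0.
- move=> _ [b Bb <-]; have [a Aa ab_le] := B_near b Bb; apply: le_trans ab_le.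
  by apply: (ge_inf (dist_lb' _ _ AS (BS _ Bb))); exists a.
Qed.

Lemma mcompact_finite m (y : 'I_m -> T) : (forall i, S (y i)) -> mcompact S d (range y).
Proof.
move=> Sy; split=> [_ [i _ <-] //|x x_in].
have /choice[k xk] : forall n, exists i, y i = x n by move=> n; have [i _] := x_in n; exists i.
have [f [i [f_incr kf]]] := finite_range_cst_subseq k.
exists f, (y i); split=> //; split; first by exists i.
apply: cvg_near_cst; apply: nearW => n /=.
by rewrite -xk kf d_xx.
Qed.

Lemma mcompact_totally_bounded K a0 r : mcompact S d K -> K a0 -> 0 < r ->
  exists m (x : 'I_m -> T), (forall i, K (x i)) /\
    forall a, K a -> exists i, d a (x i) < r.
Proof.
move=> [KS K_cpt] Ka0 r_gt0; apply: contrapT => no_net.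
have far n (v : nat -> T) : exists a, (forall i, (i < n)%N -> K (v i)) ->
    K a /\ forall i, (i < n)%N -> r <= d a (v i).
  have [Kv|] := pselect (forall i, (i < n)%N -> K (v i)); last by exists a0.
  apply: contrapT => /forallNP not_far; apply: no_net.
  exists n, (fun i : 'I_n => v i); split=> [i|a Ka]; first exact: Kv.
  apply: contrapT => /forallNP a_far; apply: (not_far a) => _; split=> // i lt_in.
  by rewrite leNgt; apply/negP => lt_r; apply: (a_far (Ordinal lt_in)).
have [g gP] := choice (fun nv : nat * (nat -> T) => far nv.1 nv.2).
(* [V n] lists [u 0, ..., u n.-1], and [u n] is chosen [r]-far from all of them. *)
pose V n := iteri n (fun k v i => if (i < k)%N then v i else g (k, v)) (fun=> a0).
pose u n := g (n, V n).
have Vu n i : (i < n)%N -> V n i = u i.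
  elim: n => // n IH; rewrite ltnS leq_eqVlt => /orP[/eqP ->|lt_in] /=.
    by rewrite ltnn.
  by rewrite lt_in IH.
have u_far n : K (u n) /\ forall i, (i < n)%N -> r <= d (u n) (u i).
  elim/ltn_ind: n => n IH; have [|Kun un_far] := gP (n, V n).
    by move=> i lt_in /=; rewrite Vu //; exact: (IH i lt_in).1.
  by split=> // i lt_in; rewrite -(Vu n i lt_in); exact: un_far.
have [f [l [f_incr [Kl ul]]]] := K_cpt u (fun n => (u_far n).1).
have r2_gt0 : 0 < r / 2 by rewrite divr_gt0.
have Su n : S (u n) := KS _ (u_far n).1.
have [N _ ul_lt] := mconv_near ul (fun n => Su (f n)) (KS _ Kl) r2_gt0.
have := (u_far (f N.+1)).2 _ (f_incr N).
have := d_triangle (Su (f N.+1)) (KS _ Kl) (Su (f N)); rewrite (d_sym (KS _ Kl)) //.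
have := ul_lt N (leqnn N); have := ul_lt N.+1 (leqnSn N); rewrite /=; lra.
Qed.

End Pseudometric.

(** * Density of general position *)

Section Density.
Variables (R : realType) (I : Type) (S : set (I -> R)) (d : (I -> R) -> (I -> R) -> R)
  (P : nat -> Prop).
Hypothesis dP : pseudometric_on S d.
Hypothesis perturb : forall m (x : 'I_m -> I -> R), (forall i, S (x i)) ->
  forall delta, 0 < delta -> exists y : 'I_m -> I -> R,
    [/\ forall i, S (y i), forall i, d (x i) (y i) < delta & general_position_wrt P (range y)].

Theorem hdense_general_position :
  hdense S d [set K | hyperspace S d K /\ general_position_wrt P K].
Proof.
move=> A [[a0 Aa0] A_cpt] e e_gt0; have AS := A_cpt.1.
have e3_gt0 : 0 < e / 3 by rewrite divr_gt0.
have [m [x [Ax x_net]]] := mcompact_totally_bounded dP A_cpt Aa0 e3_gt0.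
have [y [Sy xy_lt y_gp]] := perturb (fun i => AS _ (Ax i)) e3_gt0.
have [i0 _] := x_net a0 Aa0.
exists (range y).
  by split=> //; split; [exists (y i0), i0|exact: mcompact_finite].
apply: (@le_lt_trans _ _ (e / 3 + e / 3)); last lra.
apply: (hausdorff_dist_le dP);
  [by exists a0|by exists (y i0), i0|exact: AS|by move=> _ [i _ <-]| |].
- move=> a Aa; have [i ax_lt] := x_net a Aa; exists (y i); first by exists i.
  have := pmetric_triangle dP (AS _ Aa) (AS _ (Ax i)) (Sy i); have := xy_lt i; lra.
- move=> _ [i _ <-]; exists (x i) => //; have := xy_lt i; lra.
Qed.

End Density.

(** * General position is a G_delta *)

Section Tuples.
Variables (R : realType) (I : Type).

Definition separated m (rho : R) (A : 'I_m -> I -> R) :=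
  forall i l, i != l -> exists j, rho <= `|A i j - A l j|.

Definition robustly_independent m (delta : R) (A : 'I_m -> I -> R) :=
  forall lam : 'I_m -> R, \sum_i lam i = 0 -> \sum_i `|lam i| = 1 ->
    exists j, delta <= `|\sum_i lam i * A i j|.

Lemma separated_perturb m (A B : 'I_m -> I -> R) (rho rho' e : R) :
  separated rho A -> (forall i j, `|B i j - A i j| <= e) -> rho' + e *+ 2 <= rho ->
  separated rho' B.
Proof.
move=> A_sep AB_le; rewrite mulr2n => le_rho i l il; have [j Aj] := A_sep i l il; exists j.
have t1 := ler_distD (B i j) (A i j) (A l j); rewrite (distrC (A i j) (B i j)) in t1.
have t2 := ler_distD (B l j) (B i j) (A l j).
have := AB_le i j; have := AB_le l j; lra.
Qed.

Lemma robustly_independent_perturb m (A B : 'I_m -> I -> R) (delta delta' e : R) :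
  robustly_independent delta A -> (forall i j, `|B i j - A i j| <= e) ->
  delta' + e <= delta -> robustly_independent delta' B.
Proof.
move=> A_ind AB_le le_delta lam lam_sum lam_norm; have [j Aj] := A_ind lam lam_sum lam_norm.
exists j; have err : `|\sum_i lam i * (B i j - A i j)| <= e.
  apply: le_trans (ler_norm_sum _ _ _) _; rewrite -[e]mul1r -lam_norm mulr_suml.
  by apply: ler_sum => i _; rewrite normrM ler_wpM2l.
have : \sum_i lam i * B i j = \sum_i lam i * A i j + \sum_i lam i * (B i j - A i j).
  by rewrite -big_split; apply: eq_bigr => i _ /=; rewrite -mulrDr addrC subrK.
move=> ->; have := lerB_normD (\sum_i lam i * A i j) (\sum_i lam i * (B i j - A i j)).
lra.
Qed.

Lemma injective_separated m (A : 'I_m -> I -> R) :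
  injective A -> exists2 rho : R, 0 < rho & separated rho A.
Proof.
move=> A_inj.
have gap (q : 'I_m * 'I_m) : exists rho : R, 0 < rho /\ (q.1 != q.2 ->
    exists j, rho <= `|A q.1 j - A q.2 j|).
  case: (eqVneq q.1 q.2) => [_|q12]; first by exists 1.
  have [j Aj] : exists j, A q.1 j != A q.2 j.
    apply: contrapT => /forallNP A_eq; move/eqP: q12; apply; apply: A_inj.
    by apply: funext => j; move/negP: (A_eq j); rewrite negbK => /eqP.
  by exists `|A q.1 j - A q.2 j|; split=> [|_]; [rewrite normr_gt0 subr_eq0|exists j].
have [rho_q rho_qP] := choice gap.
have [rho [rho_gt0 rho_le]] : exists rho : R, 0 < rho /\ forall q, rho <= rho_q q.
  pose rho := \big[Num.min/1]_q rho_q q; exists rho; split.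
    apply: (big_ind (fun x => 0 < x)) => [//|x y x0 y0|q _]; first by rewrite lt_min x0 y0.
    exact: (rho_qP q).1.
  by move=> q; rewrite /rho (bigD1 q) //= ge_min lexx.
exists rho => // i l il; have [j Aj] := (rho_qP (i, l)).2 il.
by exists j; exact: le_trans (rho_le (i, l)) Aj.
Qed.

Lemma robustly_independent_affinely_independent n (A : 'I_n.+1 -> I -> R) (delta : R) :
  0 < delta -> robustly_independent delta A -> affinely_independent A.
Proof.
move=> delta_gt0 A_ind lam lam_sum lam_A i; apply: contrapT => lam_i.
pose s := \sum_k `|lam k|.
have s_gt0 : 0 < s.
  rewrite lt_def sumr_ge0 // andbT; apply/eqP => /psumr_eq0P s0; apply: lam_i.
  by apply/normr0_eq0; exact: s0.
have [||j] := A_ind (fun k => lam k / s).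
- by rewrite -mulr_suml lam_sum mul0r.
- have sV_ge0 : 0 <= s^-1 by rewrite invr_ge0 ltW.
  under eq_bigr do rewrite normrM (ger0_norm sV_ge0).
  by rewrite -mulr_suml divff // gt_eqF.
under eq_bigr do rewrite mulrAC.
by rewrite -mulr_suml lam_A mul0r normr0 leNgt delta_gt0.
Qed.

End Tuples.

Section GeneralPositionGdelta.
Variables (R : realType) (I : Type) (S : set (I -> R)) (d : (I -> R) -> (I -> R) -> R)
  (P : nat -> Prop).
Hypothesis dP : pseudometric_on S d.
Hypothesis coord_le_dist : forall x y j, S x -> S y -> `|x j - y j| <= d x y.

Lemma mconv_coord x l j : mconv d x l -> (forall n, S (x n)) -> S l ->
  (fun n => x n j) @ \oo --> l j.
Proof.
move=> xl Sx Sl; apply/cvgrPdist_lt => e e_gt0.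
apply: filterS (mconv_near dP xl Sx Sl e_gt0) => n; apply: le_lt_trans.
by rewrite distrC coord_le_dist.
Qed.

Lemma mconv_separated_injective m (A : nat -> 'I_m -> I -> R) (a : 'I_m -> I -> R) (rho : R) :
  0 < rho -> (forall n i, S (A n i)) -> (forall i, S (a i)) ->
  (forall n, separated rho (A n)) -> (forall i, mconv d (fun n => A n i) (a i)) ->
  injective a.
Proof.
move=> rho_gt0 SA Sa A_sep Aa i l a_il; apply: contrapT => /eqP il.
have rho2_gt0 : 0 < rho / 2 by rewrite divr_gt0.
have [Ni _ Ai] := mconv_near dP (Aa i) (SA ^~ i) (Sa i) rho2_gt0.
have [Nl _ Al] := mconv_near dP (Aa l) (SA ^~ l) (Sa l) rho2_gt0.
pose n := maxn Ni Nl; have [j Aj] := A_sep n i l il.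
have near_i : `|A n i j - a i j| < rho / 2.
  exact: le_lt_trans (coord_le_dist j (SA n i) (Sa i)) (Ai n (leq_maxl _ _)).
have near_l : `|A n l j - a l j| < rho / 2.
  exact: le_lt_trans (coord_le_dist j (SA n l) (Sa l)) (Al n (leq_maxr _ _)).
have := ler_distD (a i j) (A n i j) (A n l j).
rewrite a_il (distrC (a l j)) in near_i * => /le_lt_trans /(_ (ltrD near_i near_l)).
by rewrite -splitr => /(le_lt_trans Aj); rewrite ltxx.
Qed.

(* The strict inequality [rho < 1/(k+1)] leaves room to enlarge [rho] slightly, which is
   what makes each level open. *)
Definition gp_level (k n : nat) : set (set (I -> R)) :=
  [set K | hyperspace S d K /\ (P n -> exists rho delta : R,
     [/\ 0 < rho < k.+1%:R^-1, 0 < delta & forall A : 'I_n.+1 -> I -> R,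
       (forall i, K (A i)) -> separated rho A -> robustly_independent delta A])].

Lemma gp_level_open k n : hopen S d (gp_level k n).
Proof.
split=> [K [] //|K [K_hyp K_level]].
have [Pn|nPn] := pselect (P n); last by exists 1 => // B B_hyp _; split=> // /nPn.
have [rho [delta [/andP[rho_gt0 rho_lt] delta_gt0 K_robust]]] := K_level Pn.
have [rho' rho_lt' rho'_lt] : exists2 rho' : R, rho < rho' & rho' < k.+1%:R^-1.
  by exists ((rho + k.+1%:R^-1) / 2); rewrite !midf_lt.
have [m [m_gt0 m_le_delta m_le_rho]] : exists m : R, [/\ 0 < m, m <= delta & m <= rho' - rho].
  exists (Num.min delta (rho' - rho)).
  by rewrite lt_min delta_gt0 subr_gt0 rho_lt' !ge_min !lexx orbT.
have [e [e_gt0 e_le_delta e_le_rho]] :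
    exists e : R, [/\ 0 < e, e <= delta / 2 & e *+ 2 <= rho' - rho].
  by exists (m / 2); rewrite -mulr_natr; split; lra.
exists e => // B B_hyp KB_lt; split=> // _; exists rho', (delta / 2).
split; [by rewrite rho'_lt (lt_trans rho_gt0)|by rewrite divr_gt0|].
move=> A BA A_sep.
have /choice[a aP] i : exists a, K a /\ d a (A i) < e.
  by have := hausdorff_dist_approx dP K_hyp B_hyp KB_lt (BA i).
have aA_le i j : `|A i j - a i j| <= e.
  rewrite distrC; apply/ltW/(le_lt_trans _ (aP i).2); apply: coord_le_dist.
    exact: K_hyp.2.1 _ (aP i).1.
  exact: B_hyp.2.1 _ (BA i).
apply: (robustly_independent_perturb (delta := delta) _ aA_le); last lra.
apply: K_robust => [i|]; first exact: (aP i).1.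
apply: (separated_perturb (e := e) A_sep) => [i j|]; first by rewrite distrC; exact: aA_le.
lra.
Qed.

Lemma general_position_robust K n (rho : R) :
  hyperspace S d K -> general_position_wrt P K -> P n -> 0 < rho ->
  exists2 delta : R, 0 < delta & forall A : 'I_n.+1 -> I -> R,
    (forall i, K (A i)) -> separated rho A -> robustly_independent delta A.
Proof.
move=> [_ [KS K_cpt]] K_gp Pn rho_gt0; apply: contrapT => no_delta.
have /choice[p pP] N : exists p : ('I_n.+1 -> I -> R) * ('I_n.+1 -> R),
    [/\ forall i, K (p.1 i), separated rho p.1, \sum_i p.2 i = 0, \sum_i `|p.2 i| = 1 &
        forall j, `|\sum_i p.2 i * p.1 i j| < N.+1%:R^-1].
  apply: contrapT => no_p; apply: no_delta; exists N.+1%:R^-1 => // A KA A_sep lam lam0 lam1.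
  apply: contrapT => /forallNP small; apply: no_p; exists (A, lam); split=> // j.
  by rewrite ltNge; apply/negP; exact: small.
have pK N i : K ((p N).1 i) by case: (pP N).
have [f [a [f_incr Ka Aa]]] := common_subseq (@mconv_subseq R _ d) K_cpt pK.
have lam_le1 N i : `|(p (f N)).2 i| <= 1.
  by have [_ _ _ <- _] := pP (f N); apply: ler_sum_term => j.
have [g [c [g_incr _ lam_c]]] := common_subseq (@cvgn_subseq R) (@unit_ball_subseq R) lam_le1.
pose h := f \o g; have h_incr : strict_incr h := strict_incr_comp f_incr g_incr.
have SA N i : S ((p (h N)).1 i) := KS _ (pK (h N) i).
have Ah i : mconv d (fun N => (p (h N)).1 i) (a i) := mconv_subseq (Aa i) g_incr.
have a_inj : injective a.
  apply: (mconv_separated_injective rho_gt0 SA (fun i => KS _ (Ka i)) _ Ah).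
  by move=> N; have [] := pP (h N).
have c_sum : \sum_i c i = 0.
  by apply: cvgn_eq_cst (cvgn_sum lam_c) _ => N; have [] := pP (h N).
have c_norm : \sum_i `|c i| = 1.
  apply: cvgn_eq_cst (cvgn_sum (fun i => cvg_norm (lam_c i))) _ => N.
  by have [] := pP (h N).
have ca j : \sum_i c i * a i j = 0.
  have cv : (fun N => \sum_i (p (h N)).2 i * (p (h N)).1 i j) @ \oo --> \sum_i c i * a i j.
    apply: cvgn_sum => i; apply: cvgM; first exact: lam_c.
    exact: mconv_coord (Ah i) (SA ^~ i) (KS _ (Ka i)).
  rewrite -(cvg_lim (@Rhausdorff R) cv); apply: (cvg_lim (@Rhausdorff R)).
  apply/cvgrPdist_lt => e e_gt0.
  have [M _ Me] := near_infty_natSinv_lt (PosNum e_gt0).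
  exists M => // N /= MN; rewrite sub0r normrN; have [_ _ _ _ /(_ j) small] := pP (h N).
  apply: lt_trans small (le_lt_trans _ (Me _ MN)).
  by rewrite lef_pV2 ?posrE // ler_nat ltnS strict_incr_geq.
have c0 := K_gp n Pn a Ka a_inj c c_sum ca.
by move: c_norm; rewrite big1 => [/eqP|i _]; [rewrite eq_sym oner_eq0|rewrite c0 normr0].
Qed.

Lemma general_position_gp_level K k n :
  hyperspace S d K -> general_position_wrt P K -> gp_level k n K.
Proof.
move=> K_hyp K_gp; split=> // Pn.
have r_gt0 : 0 < k.+1%:R^-1 :> R by rewrite invr_gt0 ltr0Sn.
have [|delta delta_gt0 K_robust] :=
  general_position_robust (rho := k.+1%:R^-1 / 2) K_hyp K_gp Pn; first by rewrite divr_gt0.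
exists (k.+1%:R^-1 / 2), delta; split=> //.
by have := midf_lt r_gt0; rewrite add0r => -[-> ->].
Qed.

Lemma gp_levels_general_position K :
  (forall k n, gp_level k n K) -> general_position_wrt P K.
Proof.
move=> K_levels n Pn A KA A_inj; have [rho rho_gt0 A_sep] := injective_separated A_inj.
have [k _ k_lt] := near_infty_natSinv_lt (PosNum rho_gt0).
have [_ /(_ Pn)[rho' [delta [/andP[_ rho'_lt] delta_gt0 K_robust]]]] := K_levels k n.
apply: (robustly_independent_affinely_independent delta_gt0); apply: K_robust => // i l il.
have [j Aj] := A_sep i l il; exists j; apply: le_trans Aj.
by apply/ltW/(lt_trans rho'_lt); exact: k_lt k (leqnn k).
Qed.

Theorem hGdelta_general_position :
  hGdelta S d [set K | hyperspace S d K /\ general_position_wrt P K].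
Proof.
pose level_of (i : nat) := let: (k, n) := odflt (0, 0)%N (unpickle i) in gp_level k n.
exists level_of; split=> [i|].
  by rewrite /level_of; case: (odflt _ _); exact: gp_level_open.
apply/seteqP; split=> [K [K_hyp K_gp] i _|K K_levels].
  by rewrite /level_of; case: (odflt _ _) => k n; exact: general_position_gp_level.
have K_level k n : gp_level k n K.
  by have := K_levels (pickle (k, n)) Logic.I; rewrite /level_of pickleK.
by split; [exact: (K_level 0%N 0%N).1|exact: gp_levels_general_position].
Qed.

End GeneralPositionGdelta.

(** * Perturbation along the moment curve *)

Section MomentCurvePerturbation.
Variables (R : realFieldType) (m : nat) (X : 'I_m -> nat -> R).

Definition moment_mx n (s : 'I_n.+1 -> 'I_m) : 'M[R]_n.+1 :=
  \matrix_(k, p) (s k).+1%:R ^+ p.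

Definition coord_mx n (s : 'I_n.+1 -> 'I_m) : 'M[R]_n.+1 :=
  \matrix_(k, p) if unlift ord0 p is Some j then X (s k) j else 0.

Definition shift_poly n (s : 'I_n.+1 -> 'I_m) : {poly R} :=
  \det (map_mx polyC (moment_mx s) + 'X *: map_mx polyC (coord_mx s)).

Lemma det_moment_mx_neq0 n (s : 'I_n.+1 -> 'I_m) : injective s -> \det (moment_mx s) != 0.
Proof.
move=> s_inj; have -> : moment_mx s = (Vandermonde n.+1 (\row_k (s k).+1%:R))^T.
  by apply/matrixP => k p; rewrite !mxE.
rewrite det_tr det_Vandermonde; apply/prodf_neq0 => i _; apply/prodf_neq0 => j ij.
rewrite !mxE subr_eq0 eqr_nat eqSS; apply: contraTneq ij => /val_inj/s_inj ->.
by rewrite ltnn.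
Qed.

Lemma shift_polyE n (s : 'I_n.+1 -> 'I_m) u :
  (shift_poly s).[u] = \det (moment_mx s + u *: coord_mx s).
Proof.
rewrite /shift_poly -horner_evalE -det_map_mx; congr (\det _); apply/matrixP => k p.
by rewrite !mxE /= horner_evalE hornerD hornerC [_ * _%:P]mulrC hornerMX hornerC [u * _]mulrC.
Qed.

Lemma shift_poly_neq0 n (s : 'I_n.+1 -> 'I_m) : injective s -> shift_poly s != 0.
Proof.
move=> s_inj; apply: contra_neq (det_moment_mx_neq0 s_inj) => s0.
by have := shift_polyE s 0; rewrite s0 horner0 scale0r addr0.
Qed.

Lemma moment_shift_affinely_independent n (s : 'I_n.+1 -> 'I_m) (u : R) :
  u != 0 -> (shift_poly s).[u] != 0 -> forall lam : 'I_n.+1 -> R, \sum_k lam k = 0 ->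
  (forall j, (j < n)%N -> \sum_k lam k * (X (s k) j + u^-1 * (s k).+1%:R ^+ j.+1) = 0) ->
  forall k, lam k = 0.
Proof.
move=> u_neq0; rewrite shift_polyE => det_neq0 lam lam_sum lam_X k.
pose w := \row_k lam k.
have w_ker : w *m (moment_mx s + u *: coord_mx s) = 0.
  apply/matrixP => i p; rewrite ord1 !mxE; case: (unliftP ord0 p) => [j ->|->].
    transitivity (u * \sum_l lam l * (X (s l) j + u^-1 * (s l).+1%:R ^+ j.+1)).
      by rewrite mulr_sumr; apply: eq_bigr => l _; rewrite !mxE liftK lift0; field.
    by rewrite lam_X ?mulr0.
  rewrite -[RHS]lam_sum; apply: eq_bigr => l _.
  by rewrite !mxE unlift_none mulr0 addr0 expr0 mulr1.
have w_unit : moment_mx s + u *: coord_mx s \in unitmx by rewrite unitmxE unitfE.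
by have /rowP/(_ k) := mulmxK w_unit w; rewrite w_ker mul0mx !mxE => <-.
Qed.

Lemma moment_shift_general_position_near (D : nat) :
  \forall u \near +oo, forall n (s : 'I_n.+1 -> 'I_m), (n <= D)%N -> injective s ->
  forall lam : 'I_n.+1 -> R, \sum_k lam k = 0 ->
  (forall j, (j < n)%N -> \sum_k lam k * (X (s k) j + u^-1 * (s k).+1%:R ^+ j.+1) = 0) ->
  forall k, lam k = 0.
Proof.
pose Q := \prod_(n < D.+1) \prod_(s : {ffun 'I_n.+1 -> 'I_m} | injectiveb s) shift_poly s.
have Q_neq0 : Q != 0.
  by apply/prodf_neq0 => n _; apply/prodf_neq0 => s /injectiveP; exact: shift_poly_neq0.
have [b b_roots] := Cauchy_root_bound Q_neq0.
near=> u => n s n_le s_inj lam lam_sum lam_X.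
have u_gt0 : 0 < u by near: u; apply: nbhs_pinfty_gt; rewrite num_real.
have b_lt : b < u by near: u; apply: nbhs_pinfty_gt; rewrite num_real.
have Qu : ~~ root Q u.
  by apply: contraTN b_lt => /b_roots; rewrite -leNgt; exact: le_trans (ler_norm u).
pose sf : {ffun 'I_n.+1 -> 'I_m} := [ffun k => s k].
have sfE k : sf k = s k by rewrite ffunE.
have sf_inj : injectiveb sf by apply/injectiveP => k l; rewrite !sfE => /s_inj.
move: Qu; rewrite /root horner_prod (bigD1 (Ordinal (n_le : (n < D.+1)%N))) //= horner_prod.
rewrite (bigD1 sf) //= !mulf_eq0 !negb_or => /andP[/andP[sf_det _] _].
apply: (moment_shift_affinely_independent (s := sf) (lt0r_neq0 u_gt0) sf_det).
  exact: lam_sum.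
move=> j lt_jn; rewrite -[RHS](lam_X j lt_jn); apply: eq_bigr => k _; rewrite sfE.
Unshelve. all: by end_near.
Qed.

End MomentCurvePerturbation.

Lemma general_position_range (R : realType) (I : Type) (P : nat -> Prop) m
    (y : 'I_m -> I -> R) :
  (forall n (s : 'I_n.+1 -> 'I_m), P n -> injective s -> affinely_independent (y \o s)) ->
  general_position_wrt P (range y).
Proof.
move=> y_ind n Pn A A_y A_inj.
have /choice[s sP] i : exists k, y k = A i by have [k _] := A_y i; exists k.
have -> : A = y \o s by apply: funext => i; rewrite /= sP.
by apply: y_ind => // i l /(congr1 y); rewrite /= !sP => /A_inj.
Qed.

Lemma near_inv_mul_lt (R : realFieldType) (c delta : R) :
  0 < delta -> \forall u \near +oo, u^-1 * c < delta.
Proof.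
move=> delta_gt0; near=> u.
have u_gt0 : 0 < u by near: u; apply: nbhs_pinfty_gt; rewrite num_real.
have u_gt : c / delta < u by near: u; apply: nbhs_pinfty_gt; rewrite num_real.
by rewrite mulrC ltr_pdivrMr // -ltr_pdivrMl.
Unshelve. all: by end_near.
Qed.

(** * Euclidean space and [l_2] *)

Section Euclid.
Variable R : realType.

Lemma cauchy_schwarz_sum n (a b : 'I_n -> R) :
  (\sum_i a i * b i) ^+ 2 <= (\sum_i a i ^+ 2) * (\sum_i b i ^+ 2).
Proof.
set A := \sum_i a i ^+ 2; set B := \sum_i b i ^+ 2; set C := \sum_i a i * b i.
have A_ge0 : 0 <= A by apply: sumr_ge0 => i _; exact: sqr_ge0.
have sum_sqr : \sum_i (A * b i - C * a i) ^+ 2 = A * (A * B - C ^+ 2).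
  transitivity (\sum_i (A ^+ 2 * b i ^+ 2 - (2 * A * C) * (a i * b i) + C ^+ 2 * a i ^+ 2)).
    by apply: eq_bigr => i _; ring.
  rewrite !big_split /= sumrN -!mulr_sumr -/A -/B -/C; ring.
have : 0 <= A * (A * B - C ^+ 2) by rewrite -sum_sqr sumr_ge0 // => i _; exact: sqr_ge0.
have [A0|A_neq0] := eqVneq A 0; last by rewrite pmulr_rge0 ?subr_ge0 // lt_def A_neq0.
have a0 i : a i = 0.
  have := @psumr_eq0P _ _ xpredT (fun i => a i ^+ 2) (fun i _ => sqr_ge0 _) A0 i isT.
  by move/eqP; rewrite sqrf_eq0 => /eqP.
by rewrite /C big1 ?expr0n ?A0 ?mul0r // => i _; rewrite a0 mul0r.
Qed.

Lemma minkowski_sum n (u v : 'I_n -> R) :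
  Num.sqrt (\sum_i (u i + v i) ^+ 2) <=
  Num.sqrt (\sum_i u i ^+ 2) + Num.sqrt (\sum_i v i ^+ 2).
Proof.
set U := \sum_i u i ^+ 2; set V := \sum_i v i ^+ 2; set C := \sum_i u i * v i.
have U_ge0 : 0 <= U by apply: sumr_ge0 => i _; exact: sqr_ge0.
have V_ge0 : 0 <= V by apply: sumr_ge0 => i _; exact: sqr_ge0.
have -> : \sum_i (u i + v i) ^+ 2 = U + 2 * C + V.
  by rewrite /U /V /C mulr_sumr -!big_split; apply: eq_bigr => i _ /=; ring.
have C_le : C <= Num.sqrt U * Num.sqrt V.
  rewrite -sqrtrM // (le_trans (ler_norm C)) // -sqrtr_sqr ler_sqrt ?mulr_ge0 //.
  exact: cauchy_schwarz_sum.
rewrite -(ger0_norm (addr_ge0 (sqrtr_ge0 U) (sqrtr_ge0 V))) -sqrtr_sqr ler_sqrt ?sqr_ge0 //.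
by rewrite sqrrD !sqr_sqrtr //; lra.
Qed.

Lemma sqrt_sum_sqr_scale n (a : 'I_n -> R) (t : R) : 0 <= t ->
  Num.sqrt (\sum_i (t * a i) ^+ 2) = t * Num.sqrt (\sum_i a i ^+ 2).
Proof.
move=> t_ge0; under eq_bigr do rewrite exprMn.
by rewrite -mulr_sumr sqrtrM ?sqr_ge0 // sqrtr_sqr ger0_norm.
Qed.

Lemma euclid_pseudometric N : pseudometric_on (@RN R N) (@euclid_dist R N).
Proof.
rewrite /euclid_dist; split=> [x y _ _|x _|x y _ _|x y z _ _ _].
- exact: sqrtr_ge0.
- by rewrite big1 ?sqrtr0 // => i _; rewrite subrr expr0n.
- by congr Num.sqrt; apply: eq_bigr => i _; rewrite -sqrrN opprB.
have := minkowski_sum (fun i => x i - y i) (fun i => y i - z i).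
by under eq_bigr do rewrite addrA subrK.
Qed.

Lemma euclid_coord_le N (x y : 'I_N -> R) j : `|x j - y j| <= euclid_dist x y.
Proof.
rewrite /euclid_dist -sqrtr_sqr ler_sqrt ?sumr_ge0 // => [|i _]; last exact: sqr_ge0.
by apply: ler_sum_term => i; exact: sqr_ge0.
Qed.

End Euclid.

Section L2.
Variable R : realType.

Lemma series_le_limn (f : nat -> R) : (forall n, 0 <= f n) -> cvgn (series f) ->
  forall n, series f n <= limn (series f).
Proof.
move=> f_ge0 f_cvg n; apply: nondecreasing_cvgn_le => //.
exact: (nondecreasing_series (P := xpredT) (m := 0%N) (fun k _ _ => f_ge0 k)).
Qed.

Lemma l2_cvg_sub (x y : nat -> R) : l2 x -> l2 y ->
  cvgn (series (fun n => (x n - y n) ^+ 2)).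
Proof.
move=> x_l2 y_l2; apply: nondecreasing_is_cvgn.
  exact: (nondecreasing_series (P := xpredT) (m := 0%N) (fun k _ _ => sqr_ge0 _)).
exists (2 * limn (series (fun n => x n ^+ 2)) + 2 * limn (series (fun n => y n ^+ 2))).
move=> _ [n _ <-].
have := series_le_limn (fun k => sqr_ge0 (x k)) x_l2 n.
have := series_le_limn (fun k => sqr_ge0 (y k)) y_l2 n.
suff : series (fun n => (x n - y n) ^+ 2) n <=
    2 * series (fun n => x n ^+ 2) n + 2 * series (fun n => y n ^+ 2) n by lra.
rewrite !seriesEord /= !mulr_sumr -big_split /=; apply: ler_sum => i _.
by have := sqr_ge0 (x i + y i); lra.
Qed.

Lemma sqrt_series_le_l2_dist (x y : nat -> R) n : l2 x -> l2 y ->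
  Num.sqrt (\sum_(k < n) (x k - y k) ^+ 2) <= l2_dist x y.
Proof.
move=> x_l2 y_l2.
have le_lim := series_le_limn (fun k => sqr_ge0 (x k - y k)) (l2_cvg_sub x_l2 y_l2) n.
move: le_lim; rewrite [in X in X <= _]seriesEord /= => le_lim.
by rewrite ler_sqrt // (le_trans _ le_lim) // sumr_ge0 // => k _; exact: sqr_ge0.
Qed.

Lemma l2_pseudometric : pseudometric_on (@l2 R) (@l2_dist R).
Proof.
split=> [x y _ _|x _|x y _ _|x y z x_l2 y_l2 z_l2]; rewrite /l2_dist.
- exact: sqrtr_ge0.
- rewrite (_ : series _ = fun=> 0); first by rewrite lim_cst ?sqrtr0.
  by apply/funext => n; rewrite seriesEord /= big1 // => k _; rewrite subrr expr0n.
- by under eq_fun do rewrite -sqrrN opprB.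
set a := l2_dist x y; set b := l2_dist y z.
have ab_ge0 : 0 <= a + b by rewrite addr_ge0 ?sqrtr_ge0.
rewrite -(ger0_norm ab_ge0) -sqrtr_sqr ler_sqrt ?sqr_ge0 //.
apply: limr_le; first exact: l2_cvg_sub.
apply: nearW => n; rewrite seriesEord /= -(sqr_sqrtr (sumr_ge0 _ (fun k _ => sqr_ge0 _))).
rewrite ler_sqr ?nnegrE ?sqrtr_ge0 //.
apply: le_trans (lerD (sqrt_series_le_l2_dist n x_l2 y_l2) (sqrt_series_le_l2_dist n y_l2 z_l2)).
have := minkowski_sum (fun k : 'I_n => x k - y k) (fun k : 'I_n => y k - z k).
by under eq_bigr do rewrite addrA subrK.
Qed.

Lemma l2_coord_le (x y : nat -> R) j : l2 x -> l2 y -> `|x j - y j| <= l2_dist x y.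
Proof.
move=> x_l2 y_l2; apply: le_trans (sqrt_series_le_l2_dist j.+1 x_l2 y_l2).
rewrite -sqrtr_sqr ler_sqrt ?sumr_ge0 // => [|k _]; last exact: sqr_ge0.
by rewrite big_ord_recr /= lerDr sumr_ge0 // => k _; exact: sqr_ge0.
Qed.

Lemma cvg_series_eventually0 (w : nat -> R) M : (forall n, (M <= n)%N -> w n = 0) ->
  series w @ \oo --> series w M.
Proof.
move=> w0; apply: cvg_near_cst; exists M => // n /= le_Mn.
rewrite -(subnKC le_Mn); elim: (n - M)%N => [|k IH]; first by rewrite addn0.
by rewrite addnS seriesSr IH w0 ?addr0 // leq_addr.
Qed.

Lemma l2_eventually_eq (x y : nat -> R) M : l2 x -> (forall n, (M <= n)%N -> y n = x n) -> l2 y.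
Proof.
move=> x_l2 yx; rewrite /l2 /=.
have -> : (fun n => y n ^+ 2) = (fun n => x n ^+ 2) + (fun n => y n ^+ 2 - x n ^+ 2).
  by apply: funext => n /=; rewrite addrC subrK.
rewrite seriesD; apply: is_cvgD => //; apply/cvg_ex; eexists.
by apply: (cvg_series_eventually0 (M := M)) => n le_Mn; rewrite yx // subrr.
Qed.

End L2.

Section Perturbation.
Variable R : realType.

Lemma euclid_perturb_general_position N m (x : 'I_m -> 'I_N -> R) (delta : R) :
  0 < delta -> exists y : 'I_m -> 'I_N -> R,
    [/\ forall i, RN (y i), forall i, euclid_dist (x i) (y i) < delta &
        general_position_RN (range y)].
Proof.
move=> delta_gt0.
(* [X] indexes coordinates by [nat]; its junk value at [j >= N] is never read. *)
pose X i j := if insub j is Some j' then x i j' else 0.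
pose c (i : 'I_m) := Num.sqrt (\sum_(j < N) (i.+1%:R ^+ j.+1) ^+ 2 : R).
near (pinfty_nbhs R) => u.
have u_gt0 : 0 < u by near: u; apply: nbhs_pinfty_gt; rewrite num_real.
have u_small : forall i, u^-1 * c i < delta.
  by near: u; exact: filter_forall (fun i => near_inv_mul_lt (c i) delta_gt0).
exists (fun i j => x i j + u^-1 * i.+1%:R ^+ j.+1); split=> // [i|].
  rewrite /euclid_dist; under eq_bigr do rewrite opprD addrA subrr sub0r sqrrN.
  by rewrite sqrt_sum_sqr_scale ?invr_ge0 ?ltW //; exact: u_small.
apply: general_position_range; near: u.
apply: filterS (moment_shift_general_position_near X N).
move=> u u_gp n s n_le s_inj lam lam_sum lam_y.
apply: (u_gp n s n_le s_inj lam lam_sum) => j lt_jn.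
have jN : (j < N)%N := leq_trans lt_jn n_le.
by rewrite -[RHS](lam_y (Ordinal jN)); apply: eq_bigr => k _; rewrite /X insubT.
Unshelve. all: by end_near.
Qed.

Definition truncated_moment (m : nat) (u : R) (i j : nat) : R :=
  if (j < m)%N then u^-1 * i.+1%:R ^+ j.+1 else 0.

Lemma l2_perturb_general_position m (x : 'I_m -> nat -> R) (delta : R) :
  (forall i, l2 (x i)) -> 0 < delta -> exists y : 'I_m -> nat -> R,
    [/\ forall i, l2 (y i), forall i, l2_dist (x i) (y i) < delta &
        general_position_l2 (range y)].
Proof.
move=> x_l2 delta_gt0.
pose c (i : 'I_m) := Num.sqrt (\sum_(j < m) (i.+1%:R ^+ j.+1) ^+ 2 : R).
near (pinfty_nbhs R) => u.
have u_gt0 : 0 < u by near: u; apply: nbhs_pinfty_gt; rewrite num_real.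
have u_small : forall i, u^-1 * c i < delta.
  by near: u; exact: filter_forall (fun i => near_inv_mul_lt (c i) delta_gt0).
have shift0 i j : (m <= j)%N -> truncated_moment m u i j = 0.
  by move=> le_mj; rewrite /truncated_moment ltnNge le_mj.
exists (fun i j => x i j + truncated_moment m u i j); split.
- move=> i; apply: (l2_eventually_eq (M := m) (x_l2 i)) => j /shift0 ->.
  by rewrite addr0.
- move=> i; rewrite /l2_dist (cvg_lim _ (cvg_series_eventually0 (M := m) _)) //; last first.
    by move=> j /shift0 ->; rewrite addr0 subrr expr0n.
  rewrite seriesEord /=.
  under eq_bigr => j _ do rewrite /truncated_moment ltn_ord opprD addrA subrr sub0r sqrrN.
  by rewrite sqrt_sum_sqr_scale ?invr_ge0 ?ltW //; exact: u_small.
apply: general_position_range; near: u.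
apply: filterS (moment_shift_general_position_near x m).
move=> u u_gp n s _ s_inj lam lam_sum lam_y.
have n_lt_m : (n < m)%N by have := leq_card s s_inj; rewrite !card_ord.
apply: (u_gp n s (ltnW n_lt_m) s_inj lam lam_sum) => j lt_jn.
rewrite -[RHS](lam_y j); apply: eq_bigr => k _.
by rewrite /= /truncated_moment (ltn_trans lt_jn n_lt_m).
Unshelve. all: by end_near.
Qed.

End Perturbation.

Theorem proposition1 (R : realType) :
  (forall N : nat, (2 <= N)%N ->
     let G := [set K | hyperspace (@RN R N) (@euclid_dist R N) K /\
                       general_position_RN K] in
     hdense (@RN R N) (@euclid_dist R N) G /\
     hGdelta (@RN R N) (@euclid_dist R N) G) /\
  (let G := [set K | hyperspace (@l2 R) (@l2_dist R) K /\
                     general_position_l2 K] in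
   hdense (@l2 R) (@l2_dist R) G /\ hGdelta (@l2 R) (@l2_dist R) G).
Proof.
split=> [N _|]; split.
- apply: hdense_general_position (euclid_pseudometric R N) _ => m x _ delta.
  exact: euclid_perturb_general_position.
- apply: hGdelta_general_position (euclid_pseudometric R N) _ => x y j _ _.
  exact: euclid_coord_le.
- apply: hdense_general_position (l2_pseudometric R) _ => m x x_l2 delta.
  exact: l2_perturb_general_position.
- apply: hGdelta_general_position (l2_pseudometric R) _ => x y j.
  exact: l2_coord_le.
Qed.
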